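(* Let $r_1,r_2,r_3,L,M>0$ with $r_2>\max(r_1,r_3)$, and let $\lambda_1,F,\varphi_1$ be as in the context. Let $c_A>2\sqrt{-\lambda_1}$, let $B,\tau\ge0$ and $T>0$, and let $A\in\mathcal C(\mathbb{R},[0,+\infty))$ with $A(t)=c_A(t-\tau)+B$ for $t\in[\tau,\tau+T)$. Let $r(t,x)=r_1$ if $x<A(t)$, $r_2$ if $A(t)\le x<A(t)+L$, $r_3$ if $x\ge A(t)+L$, and let $f$ be globally bounded in $(t,x)$, $\mathcal C^2$ in $u$, with $f(t,x,0)=0$, $\partial_uf(t,x,0)=r(t,x)$, $r(t,x)u\ge f(t,x,u)\ge r(t,x)u-Mu^2$ for $u\ge0$, $f(t,x,u)<0$ for $u>1$. Let $c=F(c_A)$ if $c_A<2\sqrt{r_1}+2\sqrt{-\lambda_1-r_1}$ and $c=2\sqrt{r_1}$ otherwise, $\lambda(c)=\frac12(c-\sqrt{c^2-4r_1})$, and $$\overline{u}(t,x)=\begin{cases}2 & x\le ct-\frac{\ln2}{\lambda(c)},\\ e^{-\lambda(c)(x-ct)} & ct-\frac{\ln2}{\lambda(c)}<x<c_At,\\ e^{-\lambda(c)(c_A-c)t}e^{-\frac{c_A(x-c_At)}{2}}\varphi_1\big(\frac{x-c_At}{L}\big) & x\ge c_At.\end{cases}$$ Then for every constant $C\ge1$, $(t,x)\mapsto C\overline{u}(t-\tau,x-B)$ is a (generalized) super-solution of $\partial_tu=\partial_{xx}u+f(t,x,u)$ for $t\in[\tau,\tau+T)$, $x\in\mathbb{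R}$.
   Context: $\underline{L}=0$ if $r_1=r_3$, otherwise $\underline{L}=\frac{1}{\sqrt{r_2-\max(r_1,r_3)}}\operatorname{arccot}\big(\sqrt{\frac{r_2-\max(r_1,r_3)}{|r_1-r_3|}}\big)$. $\lambda_1=-\max(r_1,r_3)$ if $L\le\underline{L}$; if $L>\underline{L}$, $\lambda_1$ is the unique solution in $(-r_2,\min(-\max(r_1,r_3),\pi^2/L^2-r_2))$ of $\cot(L\sqrt{r_2+\lambda_1})=\frac{r_2+\lambda_1-\sqrt{(r_1+\lambda_1)(r_3+\lambda_1)}}{\sqrt{r_2+\lambda_1}(\sqrt{-r_1-\lambda_1}+\sqrt{-r_3-\lambda_1})}$. $F(c)=\frac{c-2\sqrt{-\lambda_1-r_1}}{2}+\frac{2r_1}{c-2\sqrt{-\lambda_1-r_1}}$. $\varphi_1$ (normalized by $\varphi_1(0)=1$): (1) if $L>\underline{L}$, with $C_3\in(0,\pi/2)$, $\cot C_3=\sqrt{(-r_1-\lambda_1)/(r_2+\lambda_1)}$: $\varphi_1(y)=e^{L\sqrt{-r_1-\lambda_1}y}$ ($y\le0$), $\sin(L\sqrt{r_2+\lambda_1}y+C_3)/\sin C_3$ ($0<y<1$), $\frac{\sin(L\sqrt{r_2+\lambda_1}+C_3)}{\sin C_3}e^{-L\sqrt{-r_3-\lambda_1}(y-1)}$ ($y\ge1$); (2) if $r_1<r_3$, $L\le\underline{L}$, with $C_3\in(0,\pi/2)$, $\cot C_3=\sqrt{(r_3-r_1)/(r_2-r_3)}$: $\varphi_1(y)=e^{L\sqrt{r_3-r_1}y}$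 ($y\le0$), $\sin(L\sqrt{r_2-r_3}y+C_3)/\sin C_3$ ($0<y<1$), $\frac{\sin(L\sqrt{r_2-r_3}+C_3)+\sqrt{r_2-r_3}\cos(L\sqrt{r_2-r_3}+C_3)L(y-1)}{\sin C_3}$ ($y\ge1$); (3) if $r_1>r_3$, $L\le\underline{L}$: $\varphi_1(y)=\psi(1-y)/\psi(1)$ with $\psi$ the function of case (2) with $r_1,r_3$ interchanged. A (generalized) super-solution is a continuous, piecewise smooth function satisfying $\partial_t\overline u\ge\partial_{xx}\overline u+f(t,x,\overline u)$ in each smoothness region and $\partial_x\overline u(t,x^-)\ge\partial_x\overline u(t,x^+)$ across interfaces. *)

From Stdlib Require Import Reals Lra List.
From Coquelicot Require Import Coquelicot.
Open Scope R_scope.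

Definition arccot (x : R) : R := PI / 2 - atan x.

Definition cot (x : R) : R := cos x / sin x.

Definition Lbar (r1 r2 r3 : R) : R :=
  if Req_EM_T r1 r3 then 0
  else / sqrt (r2 - Rmax r1 r3)
       * arccot (sqrt ((r2 - Rmax r1 r3) / Rabs (r1 - r3))).

Definition is_lambda1 (r1 r2 r3 L l : R) : Prop :=
  (L <= Lbar r1 r2 r3 -> l = - Rmax r1 r3) /\
  (Lbar r1 r2 r3 < L ->
     - r2 < l /\ l < Rmin (- Rmax r1 r3) (PI ^ 2 / L ^ 2 - r2) /\
     cot (L * sqrt (r2 + l)) =
       (r2 + l - sqrt ((r1 + l) * (r3 + l)))
       / (sqrt (r2 + l) * (sqrt (- r1 - l) + sqrt (- r3 - l)))).

Definition Ffun (r1 lam1 c : R) : R :=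
  (c - 2 * sqrt (- lam1 - r1)) / 2 + 2 * r1 / (c - 2 * sqrt (- lam1 - r1)).

(** The function psi of case (2) (requires r1 < r3, L <= Lbar). *)
Definition psi2 (r1 r2 r3 L y : R) : R :=
  let C3 := arccot (sqrt ((r3 - r1) / (r2 - r3))) in
  if Rle_dec y 0 then exp (L * sqrt (r3 - r1) * y)
  else if Rlt_dec y 1 then sin (L * sqrt (r2 - r3) * y + C3) / sin C3
  else (sin (L * sqrt (r2 - r3) + C3)
        + sqrt (r2 - r3) * cos (L * sqrt (r2 - r3) + C3) * L * (y - 1))
       / sin C3.

(** The principal eigenfunction varphi_1, normalised by varphi_1(0) = 1. *)
Definition phi1 (r1 r2 r3 L lam1 y : R) : R :=
  if Rlt_dec (Lbar r1 r2 r3) L then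
    let C3 := arccot (sqrt ((- r1 - lam1) / (r2 + lam1))) in
    if Rle_dec y 0 then exp (L * sqrt (- r1 - lam1) * y)
    else if Rlt_dec y 1 then sin (L * sqrt (r2 + lam1) * y + C3) / sin C3
    else sin (L * sqrt (r2 + lam1) + C3) / sin C3
         * exp (- L * sqrt (- r3 - lam1) * (y - 1))
  else if Rlt_dec r1 r3 then psi2 r1 r2 r3 L y
  else psi2 r3 r2 r1 L (1 - y) / psi2 r3 r2 r1 L 1.

Definition rfun (r1 r2 r3 L : R) (A : R -> R) (t x : R) : R :=
  if Rlt_dec x (A t) then r1
  else if Rlt_dec x (A t + L) then r2
  else r3.

Definition cspeed (r1 lam1 cA : R) : R :=
  if Rlt_dec cA (2 * sqrt r1 + 2 * sqrt (- lam1 - r1)) then Ffun r1 lam1 cA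
  else 2 * sqrt r1.

Definition lam_of (r1 c : R) : R := (c - sqrt (c ^ 2 - 4 * r1)) / 2.

Definition ubar (r1 r2 r3 L lam1 cA t x : R) : R :=
  let c := cspeed r1 lam1 cA in
  let lc := lam_of r1 c in
  if Rle_dec x (c * t - ln 2 / lc) then 2
  else if Rlt_dec x (cA * t) then exp (- lc * (x - c * t))
  else exp (- lc * (cA - c) * t) * exp (- cA * (x - cA * t) / 2)
       * phi1 r1 r2 r3 L lam1 ((x - cA * t) / L).

Definition cont_in_strip (t0 t1 : R) (h : R -> R -> R) (t x : R) : Prop :=
  forall eps, 0 < eps -> exists delta, 0 < delta /\
    forall s y, t0 <= s < t1 -> Rabs (s - t) < delta -> Rabs (y - x) < delta ->
      Rabs (h s y - h t x) < eps.

Definition cont2 (h : R -> R -> R) (t x : R) : Prop :=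
  forall eps, 0 < eps -> exists delta, 0 < delta /\
    forall s y, Rabs (s - t) < delta -> Rabs (y - x) < delta ->
      Rabs (h s y - h t x) < eps.

Definition left_dx (u : R -> R -> R) (t x l : R) : Prop :=
  forall eps, 0 < eps -> exists delta, 0 < delta /\
    forall h, - delta < h < 0 -> Rabs ((u t (x + h) - u t x) / h - l) < eps.
Definition right_dx (u : R -> R -> R) (t x l : R) : Prop :=
  forall eps, 0 < eps -> exists delta, 0 < delta /\
    forall h, 0 < h < delta -> Rabs ((u t (x + h) - u t x) / h - l) < eps.

(** Partial derivatives (Coquelicot's total [Derive]). *)
Definition dt (u : R -> R -> R) (t x : R) : R := Derive (fun s => u s x) t.
Definition dx (u : R -> R -> R) (t x : R) : R := Derive (fun y => u t y) x.
Definition dxx (u : R -> R -> R) (t x : R) : R := Derive (fun y => dx u t y) x.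

(** Generalized super-solution of  u_t = u_xx + f(t,x,u)  on t in [t0,t1),
    x in R: u is continuous on the strip, and there are finitely many
    continuous interface curves x = g(t) such that
    - off the interfaces (for t0 < t < t1) u is C^{1,2} (partial derivatives
      u_t, u_x, u_xx exist and are jointly continuous) and
      u_t >= u_xx + f(t,x,u);
    - on an interface, the one-sided x-derivatives exist and
      u_x(t,x^-) >= u_x(t,x^+). *)
Definition gen_supersolution (f : R -> R -> R -> R) (t0 t1 : R)
    (u : R -> R -> R) : Prop :=
  (forall t x, t0 <= t < t1 -> cont_in_strip t0 t1 u t x) /\
  exists gs : list (R -> R),
    (forall g, In g gs -> forall t, t0 <= t < t1 -> continuity_pt g t) /\
    (forall t x, t0 < t < t1 -> (forall g, In g gs -> x <> g t) ->
       ex_derive (fun s => u s x) t /\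
       ex_derive (fun y => u t y) x /\
       ex_derive (fun y => dx u t y) x /\
       cont2 (dt u) t x /\ cont2 (dx u) t x /\ cont2 (dxx u) t x /\
       dt u t x >= dxx u t x + f t x (u t x)) /\
    (forall t x, t0 < t < t1 -> (exists g, In g gs /\ x = g t) ->
       exists dl dr, left_dx u t x dl /\ right_dx u t x dr /\ dl >= dr).

(** Translating by [(tau, B)] reduces the claim to [tau = B = 0].  Then [C * ubar] is
    glued, along the lines [x = c t - ln 2 / lam(c)], [x = cA t] and [x = cA t + L], from
    the constant [2 C] (a super-solution since [f < 0] above [1]), the front
    [C e^(-lam(c) (x - c t))] (which solves [u_t = u_xx + r1 u] because
    [lam(c)^2 - c lam(c) + r1 = 0]), and, from [x = cA t] on, the moving-frame pieces
    [C e^(-lam(c) (cA - c) t) W (x - cA t)] with [W z = e^(-cA z / 2) phi1 (z / L)].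
    Since [phi1'' = L^2 (- r - lam1) phi1] on each side of [y = 1], [W] solves
    [W'' + cA W' + (cA^2 / 4 + r + lam1) W = 0], so the residual of these pieces is
    [cA^2 / 4 + lam1 - lam(c) (cA - c)] times the piece, which the choice of [c] makes
    nonnegative.  The pieces agree on the lines, and [u_x] can only jump down across them
    because [phi1'(0) <= L sqrt (- lam1 - r1) <= L (cA / 2 - lam(c))] and [phi1'] does not
    jump up at [y = 1]. *)

From Stdlib Require Import Reals Lra List.
From Coquelicot Require Import Coquelicot.
Import ListNotations.
Open Scope R_scope.

(** * Calculus in the (t, x) plane *)

Lemma cont2_iff (h : R -> R -> R) t x : cont2 h t x <-> continuity_2d_pt h t x.
Proof.
split.
- intros H eps. destruct (H eps (cond_pos eps)) as [d [Hd Hd']].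
  exists (mkposreal d Hd). intros; apply Hd'; auto.
- intros H eps Heps. destruct (H (mkposreal eps Heps)) as [d Hd].
  exists d. split; [apply cond_pos | intros; apply Hd; auto].
Qed.

Lemma locally_2d_open (P : R -> R -> Prop) t x :
  locally_2d P t x -> locally_2d (locally_2d P) t x.
Proof. apply locally_2d_impl_strong, locally_2d_forall; auto. Qed.

Lemma locally_2d_lt (g h : R -> R -> R) t x :
  continuity_2d_pt g t x -> continuity_2d_pt h t x -> g t x < h t x ->
  locally_2d (fun s y => g s y < h s y) t x.
Proof.
intros Hg Hh Hlt.
assert (Hgap : 0 < h t x - g t x) by lra.
apply (locally_2d_impl
  (fun s y => Rabs (h s y - g s y - (h t x - g t x)) < h t x - g t x)).
- apply locally_2d_forall; intros s y; split_Rabs; lra.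
- exact (continuity_2d_pt_minus _ _ _ _ Hh Hg (mkposreal _ Hgap)).
Qed.

Lemma continuity_2d_pt_of_time (l : R -> R) t x :
  continuity_pt l t -> continuity_2d_pt (fun s _ => l s) t x.
Proof. intros Hl; apply (continuity_1d_2d_pt_comp l (fun s _ => s)), continuity_2d_pt_id1; auto. Qed.

Lemma locally_2d_below (l : R -> R) t x :
  continuity_pt l t -> x < l t -> locally_2d (fun s y => y < l s) t x.
Proof.
intros Hl Hx; apply (locally_2d_lt (fun _ y => y) (fun s _ => l s)); auto.
- apply continuity_2d_pt_id2.
- now apply continuity_2d_pt_of_time.
Qed.

Lemma locally_2d_above (l : R -> R) t x :
  continuity_pt l t -> l t < x -> locally_2d (fun s y => l s < y) t x.
Proof.
intros Hl Hx; apply (locally_2d_lt (fun s _ => l s) (fun _ y => y)); auto.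
- now apply continuity_2d_pt_of_time.
- apply continuity_2d_pt_id2.
Qed.

Lemma cont2_ext_loc (v u : R -> R -> R) t x :
  locally_2d (fun s y => v s y = u s y) t x -> cont2 v t x -> cont2 u t x.
Proof. rewrite !cont2_iff; apply continuity_2d_pt_ext_loc. Qed.

Lemma cont2_of_local_cases (u p q : R -> R -> R) t x :
  cont2 p t x -> cont2 q t x -> p t x = u t x -> q t x = u t x ->
  locally_2d (fun s y => u s y = p s y \/ u s y = q s y) t x -> cont2 u t x.
Proof.
rewrite !cont2_iff. intros Hp Hq Ept Eqt Hloc eps.
apply (locally_2d_impl (fun s y => (u s y = p s y \/ u s y = q s y) /\
  Rabs (p s y - p t x) < eps /\ Rabs (q s y - q t x) < eps)).
- apply locally_2d_forall; intros s y [[E|E] [H1 H2]]; rewrite E; congruence.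
- apply locally_2d_and; [exact Hloc | apply locally_2d_and; [apply Hp | apply Hq]].
Qed.

Definition C12_at (u : R -> R -> R) (t x : R) : Prop :=
  ex_derive (fun s => u s x) t /\ ex_derive (fun y => u t y) x /\
  ex_derive (fun y => dx u t y) x /\
  cont2 (dt u) t x /\ cont2 (dx u) t x /\ cont2 (dxx u) t x.

Lemma locally_2d_dt_ext (v u : R -> R -> R) t x :
  locally_2d (fun s y => v s y = u s y) t x ->
  locally_2d (fun s y => dt v s y = dt u s y) t x.
Proof.
intros H; apply (locally_2d_impl (locally_2d (fun s y => v s y = u s y)));
  [|now apply locally_2d_open].
apply locally_2d_forall; intros s y H'.
apply Derive_ext_loc, (locally_2d_1d_const_y _ _ _ H').
Qed.

Lemma locally_2d_dx_ext (v u : R -> R -> R) t x :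
  locally_2d (fun s y => v s y = u s y) t x ->
  locally_2d (fun s y => dx v s y = dx u s y) t x.
Proof.
intros H; apply (locally_2d_impl (locally_2d (fun s y => v s y = u s y)));
  [|now apply locally_2d_open].
apply locally_2d_forall; intros s y H'.
apply Derive_ext_loc, (locally_2d_1d_const_x _ _ _ H').
Qed.

Lemma C12_at_ext_loc (v u : R -> R -> R) t x :
  locally_2d (fun s y => v s y = u s y) t x -> C12_at v t x ->
  C12_at u t x /\ dt v t x = dt u t x /\ dxx v t x = dxx u t x.
Proof.
intros H (Dt & Dx & Dxx & Ct & Cx & Cxx).
assert (Ht := locally_2d_dt_ext _ _ _ _ H).
assert (Hx := locally_2d_dx_ext _ _ _ _ H).
assert (Hxx := locally_2d_dx_ext _ _ _ _ Hx).
rewrite cont2_iff in Ct, Cx, Cxx.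
repeat split; try rewrite cont2_iff.
- exact (ex_derive_ext_loc _ _ _ (locally_2d_1d_const_y _ _ _ H) Dt).
- exact (ex_derive_ext_loc _ _ _ (locally_2d_1d_const_x _ _ _ H) Dx).
- exact (ex_derive_ext_loc _ _ _ (locally_2d_1d_const_x _ _ _ Hx) Dxx).
- exact (continuity_2d_pt_ext_loc _ _ _ _ Ht Ct).
- exact (continuity_2d_pt_ext_loc _ _ _ _ Hx Cx).
- exact (continuity_2d_pt_ext_loc _ _ _ _ Hxx Cxx).
- exact (locally_2d_singleton _ _ _ Ht).
- exact (locally_2d_singleton _ _ _ Hxx).
Qed.

Lemma supersolution_at_ext_loc (f : R -> R -> R -> R) (v u : R -> R -> R) t x :
  locally_2d (fun s y => v s y = u s y) t x ->
  C12_at v t x /\ dt v t x >= dxx v t x + f t x (v t x) ->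
  C12_at u t x /\ dt u t x >= dxx u t x + f t x (u t x).
Proof.
intros H [Hv Hineq]; destruct (C12_at_ext_loc v u t x H Hv) as (Hu & Et & Exx).
split; [exact Hu|]. rewrite <- Et, <- Exx, <- (locally_2d_singleton _ _ _ H); exact Hineq.
Qed.

Lemma left_dx_of_eq (u : R -> R -> R) (p : R -> R) t x e l : 0 < e ->
  (forall y, x - e < y <= x -> u t y = p y) -> is_derive p x l -> left_dx u t x l.
Proof.
intros He Hp Hd eps Heps. apply is_derive_Reals in Hd.
destruct (Hd eps Heps) as [d Hd'].
exists (Rmin e d); split; [apply Rmin_pos; [lra | apply cond_pos]|].
intros h Hh. assert (Rmin e d <= e) by apply Rmin_l. assert (Rmin e d <= d) by apply Rmin_r.
rewrite !Hp by lra. apply Hd'; [lra | rewrite Rabs_left; lra].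
Qed.

Lemma right_dx_of_eq (u : R -> R -> R) (p : R -> R) t x e l : 0 < e ->
  (forall y, x <= y < x + e -> u t y = p y) -> is_derive p x l -> right_dx u t x l.
Proof.
intros He Hp Hd eps Heps. apply is_derive_Reals in Hd.
destruct (Hd eps Heps) as [d Hd'].
exists (Rmin e d); split; [apply Rmin_pos; [lra | apply cond_pos]|].
intros h Hh. assert (Rmin e d <= e) by apply Rmin_l. assert (Rmin e d <= d) by apply Rmin_r.
rewrite !Hp by lra. apply Hd'; [lra | rewrite Rabs_right; lra].
Qed.

Lemma ex_derive_continuous_R (f : R -> R) x : ex_derive f x -> continuous f x.
Proof. apply (@ex_derive_continuous R_AbsRing R_NormedModule). Qed.

Lemma is_derive_eq (f : R -> R) x l l' : is_derive f x l -> l = l' -> is_derive f x l'.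
Proof. now intros H <-. Qed.

Lemma is_derive_const_R (k s : R) : is_derive (fun _ : R => k) s 0.
Proof. auto_derive; auto. Qed.

Lemma continuous_const_R (k s : R) : continuous (fun _ : R => k) s.
Proof. apply continuous_const. Qed.

Definition moving_frame (a : R -> R) (b : R) (w : R -> R) (s y : R) : R :=
  a s * w (y - b * s).

Lemma continuity_2d_pt_moving_frame (a w : R -> R) b s y :
  continuous a s -> continuous w (y - b * s) ->
  continuity_2d_pt (moving_frame a b w) s y.
Proof.
intros Ha Hw; apply continuity_pt_filterlim in Ha, Hw.
apply continuity_2d_pt_mult.
- apply (continuity_1d_2d_pt_comp a (fun s _ => s)), continuity_2d_pt_id1; auto.
- apply (continuity_1d_2d_pt_comp w (fun s y => y - b * s)); auto.
  apply continuity_2d_pt_minus; [apply continuity_2d_pt_id2|].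
  apply continuity_2d_pt_mult; [apply continuity_2d_pt_const | apply continuity_2d_pt_id1].
Qed.

Lemma cont2_moving_frame (a w : R -> R) b s y :
  continuous a s -> continuous w (y - b * s) -> cont2 (moving_frame a b w) s y.
Proof. intros; apply cont2_iff, continuity_2d_pt_moving_frame; auto. Qed.

Lemma moving_frame_is_derive_x (a w w' : R -> R) b s y :
  is_derive w (y - b * s) (w' (y - b * s)) ->
  is_derive (fun y => moving_frame a b w s y) y (moving_frame a b w' s y).
Proof.
intros Hw; unfold moving_frame. auto_derive; [eexists; exact Hw|].
rewrite Rmult_1_l; f_equal; apply is_derive_unique, Hw.
Qed.

Lemma moving_frame_dx (a w w' : R -> R) b :
  (forall z, is_derive w z (w' z)) ->
  forall s y, dx (moving_frame a b w) s y = moving_frame a b w' s y.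
Proof. intros Hw s y; apply is_derive_unique, moving_frame_is_derive_x, Hw. Qed.

Section MovingFrame.
Variables (a a' w w' w'' : R -> R) (b : R).
Hypotheses (Da : forall s, is_derive a s (a' s)) (Ca' : forall s, continuous a' s)
  (Dw : forall z, is_derive w z (w' z)) (Dw' : forall z, is_derive w' z (w'' z))
  (Cw'' : forall z, continuous w'' z).

Let Ca s : continuous a s := ex_derive_continuous_R _ _ (ex_intro _ _ (Da s)).
Let Cw z : continuous w z := ex_derive_continuous_R _ _ (ex_intro _ _ (Dw z)).
Let Cw' z : continuous w' z := ex_derive_continuous_R _ _ (ex_intro _ _ (Dw' z)).

Lemma moving_frame_is_derive_t s y :
  is_derive (fun s => moving_frame a b w s y) s
    (moving_frame a' b w s y - b * moving_frame a b w' s y).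
Proof.
unfold moving_frame. auto_derive.
- split; [eexists; apply Da | split; [eexists; apply Dw | auto]].
- replace (Derive (fun x : R => a x) s) with (a' s) by (symmetry; apply is_derive_unique, Da).
  replace (Derive (fun x : R => w x) (y + - (b * s))) with (w' (y - b * s))
    by (symmetry; apply is_derive_unique, Dw).
  unfold moving_frame, Rminus; ring.
Qed.

Lemma moving_frame_dt s y :
  dt (moving_frame a b w) s y = moving_frame a' b w s y - b * moving_frame a b w' s y.
Proof. apply is_derive_unique, moving_frame_is_derive_t. Qed.

Lemma moving_frame_dxx s y : dxx (moving_frame a b w) s y = moving_frame a b w'' s y.
Proof.
unfold dxx; rewrite (Derive_ext _ _ _ (moving_frame_dx a w w' b Dw s)).
exact (moving_frame_dx a w' w'' b Dw' s y).
Qed.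

Lemma moving_frame_C12 s y : C12_at (moving_frame a b w) s y.
Proof.
repeat split; try rewrite cont2_iff.
- eexists; apply moving_frame_is_derive_t.
- eexists; apply moving_frame_is_derive_x, Dw.
- eapply ex_derive_ext; [intros; symmetry; apply (moving_frame_dx a w w' b Dw)|].
  eexists; apply moving_frame_is_derive_x, Dw'.
- apply (continuity_2d_pt_ext (fun s y => moving_frame a' b w s y - b * moving_frame a b w' s y)).
  { intros; symmetry; apply moving_frame_dt. }
  apply continuity_2d_pt_minus; [|apply continuity_2d_pt_mult; [apply continuity_2d_pt_const|]];
    apply continuity_2d_pt_moving_frame; auto.
- apply (continuity_2d_pt_ext (moving_frame a b w')).
  { intros; symmetry; apply (moving_frame_dx a w w' b Dw). }
  apply continuity_2d_pt_moving_frame; auto.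
- apply (continuity_2d_pt_ext (moving_frame a b w'')).
  { intros; symmetry; apply moving_frame_dxx. }
  apply continuity_2d_pt_moving_frame; auto.
Qed.

End MovingFrame.

Lemma gen_supersolution_intro (f : R -> R -> R -> R) t0 t1 (u : R -> R -> R)
    (gs : list (R -> R)) :
  (forall t x, t0 <= t < t1 -> cont2 u t x) ->
  (forall g, In g gs -> forall t, t0 <= t < t1 -> continuity_pt g t) ->
  (forall t x, t0 < t < t1 -> (forall g, In g gs -> x <> g t) ->
     C12_at u t x /\ dt u t x >= dxx u t x + f t x (u t x)) ->
  (forall t x, t0 < t < t1 -> (exists g, In g gs /\ x = g t) ->
     exists dl dr, left_dx u t x dl /\ right_dx u t x dr /\ dl >= dr) ->
  gen_supersolution f t0 t1 u.
Proof.
intros Hc Hg Hoff Hon. split.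
- intros t x Ht eps Heps. destruct (Hc t x Ht eps Heps) as [d [Hd H]].
  exists d; split; auto.
- exists gs; split; [exact Hg | split; [|exact Hon]].
  intros t x Ht Hx. destruct (Hoff t x Ht Hx) as [(? & ? & ? & ? & ? & ?) ?]; tauto.
Qed.

Lemma Derive_shift (g : R -> R) a t : Derive (fun s => g (s - a)) t = Derive g (t - a).
Proof.
unfold Derive; f_equal; apply Lim_ext; intros h.
now replace (t + h - a) with (t - a + h) by ring.
Qed.

Lemma ex_derive_shift (g : R -> R) a t :
  ex_derive g (t - a) -> ex_derive (fun s => g (s - a)) t.
Proof. intros H; auto_derive; exact H. Qed.

Section Translation.
Variables (a b : R).

Lemma cont2_shift (h h' : R -> R -> R) t x :
  (forall s y, h' s y = h (s - a) (y - b)) -> cont2 h (t - a) (x - b) -> cont2 h' t x.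
Proof.
intros E H eps Heps. destruct (H eps Heps) as [d [Hd H']].
exists d; split; auto; intros s y Hs Hy; rewrite !E.
apply H'; [replace (s - a - (t - a)) with (s - t) | replace (y - b - (x - b)) with (y - x)];
  auto; ring.
Qed.

Variable v : R -> R -> R.
Let u (t x : R) : R := v (t - a) (x - b).

Lemma dt_shift s y : dt u s y = dt v (s - a) (y - b).
Proof. exact (Derive_shift (fun s => v s (y - b)) a s). Qed.

Lemma dx_shift s y : dx u s y = dx v (s - a) (y - b).
Proof. exact (Derive_shift (v (s - a)) b y). Qed.

Lemma dxx_shift s y : dxx u s y = dxx v (s - a) (y - b).
Proof.
unfold dxx; rewrite (Derive_ext _ _ _ (dx_shift s)).
exact (Derive_shift (dx v (s - a)) b y).
Qed.

Lemma C12_at_shift t x : C12_at v (t - a) (x - b) -> C12_at u t x.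
Proof.
intros (Dt & Dx & Dxx & Ct & Cx & Cxx); repeat split.
- exact (ex_derive_shift (fun s => v s (x - b)) a t Dt).
- exact (ex_derive_shift (v (t - a)) b x Dx).
- eapply ex_derive_ext; [intros y; symmetry; apply dx_shift|].
  exact (ex_derive_shift (dx v (t - a)) b x Dxx).
- exact (cont2_shift (dt v) (dt u) t x dt_shift Ct).
- exact (cont2_shift (dx v) (dx u) t x dx_shift Cx).
- exact (cont2_shift (dxx v) (dxx u) t x dxx_shift Cxx).
Qed.

Lemma left_dx_shift t x l : left_dx v (t - a) (x - b) l -> left_dx u t x l.
Proof.
intros H eps Heps; destruct (H eps Heps) as [d [Hd H']].
exists d; split; auto; intros h Hh; unfold u.
replace (x + h - b) with (x - b + h) by ring; auto.
Qed.

Lemma right_dx_shift t x l : right_dx v (t - a) (x - b) l -> right_dx u t x l.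
Proof.
intros H eps Heps; destruct (H eps Heps) as [d [Hd H']].
exists d; split; auto; intros h Hh; unfold u.
replace (x + h - b) with (x - b + h) by ring; auto.
Qed.

Lemma cont_in_strip_shift t0 t1 t x :
  cont_in_strip t0 t1 v (t - a) (x - b) -> cont_in_strip (a + t0) (a + t1) u t x.
Proof.
intros H eps Heps; destruct (H eps Heps) as [d [Hd H']].
exists d; split; auto; intros s y Hs Hst Hy; apply H'.
- lra.
- now replace (s - a - (t - a)) with (s - t) by ring.
- now replace (y - b - (x - b)) with (y - x) by ring.
Qed.

Lemma gen_supersolution_shift (f : R -> R -> R -> R) t0 t1 :
  gen_supersolution (fun t x => f (a + t) (b + x)) t0 t1 v ->
  gen_supersolution f (a + t0) (a + t1) u.
Proof.
intros [Hc [gs [Hg [Hoff Hon]]]]; split.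
{ intros t x Ht; apply cont_in_strip_shift, Hc; lra. }
exists (map (fun g t => b + g (t - a)) gs); split; [|split].
- intros g' Hin t Ht; apply in_map_iff in Hin as [g [<- Hin]].
  apply (continuity_pt_plus (fct_cte b) (fun t => g (t - a)));
    [apply continuity_pt_const; now intros ? ?|].
  apply (continuity_pt_comp (fun t => t - a) g).
  + apply continuity_pt_minus; [apply continuity_pt_id | apply continuity_pt_const; now intros ? ?].
  + apply Hg; [exact Hin | lra].
- intros t x Ht Hx.
  destruct (Hoff (t - a) (x - b)) as (D1 & D2 & D3 & C1 & C2 & C3 & Ineq).
  { lra. }
  { intros g Hin E. apply (Hx (fun t => b + g (t - a))); [|lra].
    exact (in_map (fun g0 t => b + g0 (t - a)) _ _ Hin). }
  destruct (C12_at_shift t x) as (? & ? & ? & ? & ? & ?); [repeat split; assumption|].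
  repeat split; auto.
  rewrite dt_shift, dxx_shift. unfold u.
  now replace (a + (t - a)) with t in Ineq by ring; replace (b + (x - b)) with x in Ineq by ring.
- intros t x Ht [g' [Hin Hx]]; apply in_map_iff in Hin as [g [<- Hin]].
  destruct (Hon (t - a) (x - b)) as (dl & dr & Hl & Hr & Hlr); [lra | exists g; split; auto; lra|].
  exists dl, dr; split; [apply left_dx_shift | split; [apply right_dx_shift|]]; auto.
Qed.
End Translation.

(** * The speed *)

Lemma lam_of_root r1 m : 0 < m -> m * m <= r1 -> lam_of r1 (m + r1 / m) = m.
Proof.
intros Hm Hmr. unfold lam_of.
replace ((m + r1 / m) ^ 2 - 4 * r1) with ((r1 / m - m) ^ 2) by (field; lra).
rewrite sqrt_pow2; [field; lra|].
apply (Rmult_le_reg_r m); [lra|].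
unfold Rdiv; rewrite Rmult_0_l, Rmult_minus_distr_r, Rmult_assoc, Rinv_l; lra.
Qed.

(** The branch [F] of [cspeed] is the first argument of the minimum, the KPP speed
    [2 sqrt r1] the second. *)
Lemma cspeed_min r1 lam1 cA : 0 < r1 -> 2 * sqrt (- lam1 - r1) < cA ->
  let m := Rmin (cA / 2 - sqrt (- lam1 - r1)) (sqrt r1) in
  cspeed r1 lam1 cA = m + r1 / m.
Proof.
intros Hr1 HcA m.
assert (Hq : 0 < sqrt r1) by (apply sqrt_lt_R0; lra).
assert (Hq2 : sqrt r1 * sqrt r1 = r1) by (apply sqrt_sqrt; lra).
unfold m, cspeed, Ffun; destruct (Rlt_dec cA (2 * sqrt r1 + 2 * sqrt (- lam1 - r1))).
- rewrite Rmin_left by lra; field; lra.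
- rewrite Rmin_right by lra. set (q := sqrt r1) in *. rewrite <- Hq2; field; lra.
Qed.

Lemma cspeed_spec r1 lam1 cA : 0 < r1 -> r1 <= - lam1 -> 2 * sqrt (- lam1) < cA ->
  let c := cspeed r1 lam1 cA in let lc := lam_of r1 c in
  0 < lc /\ c * lc = lc ^ 2 + r1 /\ c <= cA /\ lc <= cA / 2 - sqrt (- lam1 - r1) /\
  lc * (cA - c) <= cA ^ 2 / 4 + lam1.
Proof.
intros Hr1 Hl HcA c lc.
set (s := sqrt (- lam1 - r1)). set (q := sqrt r1).
assert (Hs : 0 <= s) by apply sqrt_pos.
assert (Hs2 : s * s = - lam1 - r1) by (apply sqrt_sqrt; lra).
assert (Hq : 0 < q) by (apply sqrt_lt_R0; lra).
assert (Hq2 : q * q = r1) by (apply sqrt_sqrt; lra).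
assert (Hm0 : 0 <= sqrt (- lam1)) by apply sqrt_pos.
assert (Hm2 : sqrt (- lam1) * sqrt (- lam1) = - lam1) by (apply sqrt_sqrt; lra).
assert (Hsm : s <= sqrt (- lam1)) by (apply sqrt_le_1; lra).
assert (HcA2 : - 4 * lam1 < cA * cA) by nra.
set (m := Rmin (cA / 2 - s) q).
assert (Hm_s := Rmin_l (cA / 2 - s) q). assert (Hm_q := Rmin_r (cA / 2 - s) q). fold m in Hm_s, Hm_q.
assert (Hm : 0 < m) by (apply Rmin_pos; lra).
assert (Ec : c = m + r1 / m) by (apply cspeed_min; [lra | fold s; lra]).
assert (Elc : lc = m) by (unfold lc; rewrite Ec; apply lam_of_root; nra).
assert (Hcases : m = cA / 2 - s \/ m = q) by (unfold m, Rmin; destruct (Rle_dec (cA / 2 - s) q); auto).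
rewrite Elc, Ec. repeat split; try lra.
- field; lra.
- apply (Rmult_le_reg_r m); [lra|]. field_simplify; [|lra].
  destruct Hcases as [E|E]; rewrite E in *; nra.
- replace (m * (cA - (m + r1 / m))) with (cA ^ 2 / 4 - r1 - (cA / 2 - m) ^ 2) by (field; lra). nra.
Qed.

(** * The principal eigenfunction *)

Lemma arccot_spec x : 0 < x ->
  0 < arccot x < PI / 2 /\ 0 < sin (arccot x) /\ cos (arccot x) = x * sin (arccot x).
Proof.
intros Hx. unfold arccot.
assert (H0 : 0 < atan x) by (rewrite <- atan_0; apply atan_increasing; auto).
destruct (atan_bound x) as [_ H1].
assert (Hc : 0 < cos (atan x)) by (apply cos_gt_0; lra).
rewrite sin_shift, cos_shift. repeat split; try lra; auto.
rewrite <- (tan_atan x) at 2; unfold tan; field; lra.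
Qed.

(** The eigenvalue equation is exactly the [C^1] matching at [y = 1] of the
    sine piece with the decaying exponential. *)
Lemma long_phase al be p X : 0 < al -> 0 < be -> 0 < p -> 0 < X < PI ->
  cot X = (p * p - al * be) / (p * (al + be)) ->
  let C3 := arccot (al / p) in
  0 < sin C3 /\ p * cos C3 = al * sin C3 /\ p * cos (X + C3) + be * sin (X + C3) = 0 /\
  forall y, 0 <= y <= 1 -> 0 < sin (X * y + C3).
Proof.
intros Hal Hbe Hp HX Hcot C3.
destruct (arccot_spec (al / p)) as [HC [HS HcC]]; [apply Rdiv_lt_0_compat; auto|].
fold C3 in HC, HS, HcC.
assert (HsX : 0 < sin X) by (apply sin_gt_0; lra).
assert (HcX : cos X = (p * p - al * be) / (p * (al + be)) * sin X).
{ rewrite <- Hcot; unfold cot; field; lra. }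
assert (Hsth : sin (X + C3) = sin X * sin C3 * ((al * al + p * p) / (p * (al + be)))).
{ rewrite sin_plus, HcX, HcC; field; lra. }
assert (Hcth : cos (X + C3) = - sin X * sin C3 * (be * (al * al + p * p) / (p * p * (al + be)))).
{ rewrite cos_plus, HcX, HcC; field; lra. }
assert (Hpos : 0 < sin (X + C3)).
{ rewrite Hsth; apply Rmult_lt_0_compat; [nra | apply Rdiv_lt_0_compat; nra]. }
assert (Hth : X + C3 < PI).
{ destruct (Rlt_le_dec (X + C3) PI) as [h|h]; auto.
  assert (sin (X + C3) <= 0) by (apply sin_le_0; lra). lra. }
repeat split; auto.
- rewrite HcC; field; lra.
- rewrite Hsth, Hcth; field; lra.
- intros y Hy; apply sin_gt_0; nra.
Qed.

(** [arccot x + arccot (/ x) = PI / 2] turns [L <= Lbar] into a phase at most [PI / 2]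
    at [y = 1]. *)
Lemma short_phase a b L : 0 < a -> 0 < b -> 0 < L ->
  L <= / sqrt a * arccot (sqrt (a / b)) ->
  let C3 := arccot (sqrt (b / a)) in
  0 < sin C3 /\ sqrt a * cos C3 = sqrt b * sin C3 /\ 0 <= cos (L * sqrt a + C3) /\
  forall y, 0 <= y <= 1 -> 0 < sin (L * sqrt a * y + C3).
Proof.
intros Ha Hb HL HLb C3.
assert (Hsa : 0 < sqrt a) by (apply sqrt_lt_R0; auto).
assert (Hk : 0 < sqrt (b / a)) by (apply sqrt_lt_R0, Rdiv_lt_0_compat; auto).
destruct (arccot_spec (sqrt (b / a)) Hk) as [HC [HS HcC]]; fold C3 in HC, HS, HcC.
assert (Hsum : C3 + arccot (sqrt (a / b)) = PI / 2).
{ replace (sqrt (a / b)) with (/ sqrt (b / a)) by (rewrite <- sqrt_inv; f_equal; field; lra).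
  unfold C3, arccot; rewrite atan_inv by auto; ring. }
apply (Rmult_le_compat_r (sqrt a)) in HLb; [|lra].
replace (/ sqrt a * arccot (sqrt (a / b)) * sqrt a) with (arccot (sqrt (a / b))) in HLb
  by (field; lra).
assert (HLa : 0 < L * sqrt a) by (apply Rmult_lt_0_compat; lra).
repeat split; auto.
- rewrite HcC, sqrt_div_alt by lra; field; lra.
- apply cos_ge_0; lra.
- intros y Hy; apply sin_gt_0; nra.
Qed.

Lemma phase_lt_pi L r2 lam1 : 0 < L -> - r2 < lam1 -> lam1 < PI ^ 2 / L ^ 2 - r2 ->
  L * sqrt (r2 + lam1) < PI.
Proof.
intros HL Hl1 Hl2.
assert (H : L ^ 2 * (r2 + lam1) < PI ^ 2).
{ apply (Rmult_lt_compat_l (L ^ 2)) in Hl2; [|nra].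
  replace (L ^ 2 * (PI ^ 2 / L ^ 2 - r2)) with (PI ^ 2 - L ^ 2 * r2) in Hl2 by (field; lra). nra. }
assert (HPI := PI_RGT_0); assert (HL2 := pow2_ge_0 L).
rewrite <- (sqrt_pow2 L), <- (sqrt_pow2 PI), <- sqrt_mult by lra.
apply sqrt_lt_1_alt; split; [apply Rmult_le_pos|]; lra.
Qed.

Set Implicit Arguments.
Record eigen_profile (r1 r2 r3 L lam1 : R) (g1 g1' g2 g2' : R -> R) : Prop := {
  phi1_left : forall y, 0 <= y < 1 -> phi1 r1 r2 r3 L lam1 y = g1 y;
  phi1_right : forall y, 1 <= y -> phi1 r1 r2 r3 L lam1 y = g2 y;
  g1_at_0 : g1 0 = 1;
  g1_g2_at_1 : g1 1 = g2 1;
  g1_deriv : forall y, is_derive g1 y (g1' y);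
  g1'_deriv : forall y, is_derive g1' y (L ^ 2 * (- r2 - lam1) * g1 y);
  g2_deriv : forall y, is_derive g2 y (g2' y);
  g2'_deriv : forall y, is_derive g2' y (L ^ 2 * (- r3 - lam1) * g2 y);
  g1_nonneg : forall y, 0 <= y < 1 -> 0 <= g1 y;
  g2_nonneg : forall y, 1 <= y -> 0 <= g2 y;
  slope_at_0 : g1' 0 <= L * sqrt (- lam1 - r1);
  kink_at_1 : g2' 1 <= g1' 1 }.
Unset Implicit Arguments.

Lemma eigen_profile_long r1 r2 r3 L lam1 : 0 < L -> Lbar r1 r2 r3 < L ->
  - r2 < lam1 -> lam1 < Rmin (- Rmax r1 r3) (PI ^ 2 / L ^ 2 - r2) ->
  cot (L * sqrt (r2 + lam1)) = (r2 + lam1 - sqrt ((r1 + lam1) * (r3 + lam1)))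
     / (sqrt (r2 + lam1) * (sqrt (- r1 - lam1) + sqrt (- r3 - lam1))) ->
  let al := sqrt (- r1 - lam1) in let p := sqrt (r2 + lam1) in
  let be := sqrt (- r3 - lam1) in let C3 := arccot (sqrt ((- r1 - lam1) / (r2 + lam1))) in
  eigen_profile r1 r2 r3 L lam1
    (fun y => sin (L * p * y + C3) / sin C3) (fun y => L * p * cos (L * p * y + C3) / sin C3)
    (fun y => sin (L * p + C3) / sin C3 * exp (- L * be * (y - 1)))
    (fun y => - L * be * (sin (L * p + C3) / sin C3 * exp (- L * be * (y - 1)))).
Proof.
intros HL HLb Hl1 Hl2 Hcot al p be C3.
assert (Hm := Rmin_l (- Rmax r1 r3) (PI ^ 2 / L ^ 2 - r2)).
assert (Hpi := Rmin_r (- Rmax r1 r3) (PI ^ 2 / L ^ 2 - r2)).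
assert (Hx1 := Rmax_l r1 r3); assert (Hx3 := Rmax_r r1 r3).
assert (Hal : 0 < al) by (apply sqrt_lt_R0; lra).
assert (Hp : 0 < p) by (apply sqrt_lt_R0; lra).
assert (Hbe : 0 < be) by (apply sqrt_lt_R0; lra).
assert (Hp2 : p * p = r2 + lam1) by (apply sqrt_sqrt; lra).
assert (Hbe2 : be * be = - r3 - lam1) by (apply sqrt_sqrt; lra).
assert (HX : 0 < L * p < PI) by (split; [nra | apply phase_lt_pi; lra]).
assert (Hcot' : cot (L * p) = (p * p - al * be) / (p * (al + be))).
{ fold al p be in Hcot; rewrite Hcot, <- Hp2; do 2 f_equal.
  unfold al, be; rewrite <- sqrt_mult by lra; f_equal; ring. }
assert (EC3 : arccot (al / p) = C3) by (unfold C3, al, p; f_equal; symmetry; apply sqrt_div; lra).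
destruct (long_phase al be p (L * p) Hal Hbe Hp HX Hcot') as (HS & HcC & Hmatch & Hsin).
rewrite EC3 in HS, HcC, Hmatch, Hsin.
assert (Hphi : forall y, phi1 r1 r2 r3 L lam1 y =
  if Rle_dec y 0 then exp (L * al * y) else if Rlt_dec y 1 then sin (L * p * y + C3) / sin C3
  else sin (L * p + C3) / sin C3 * exp (- L * be * (y - 1))).
{ intros y; unfold phi1; destruct (Rlt_dec (Lbar r1 r2 r3) L); [reflexivity | lra]. }
assert (Hsth := Hsin 1 ltac:(lra)); rewrite Rmult_1_r in Hsth.
split; intros.
- rewrite Hphi; destruct (Rle_dec y 0); [|destruct (Rlt_dec y 1); [reflexivity | lra]].
  replace y with 0 by lra; rewrite !Rmult_0_r, Rplus_0_l, exp_0; field; lra.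
- rewrite Hphi; destruct (Rle_dec y 0); [lra | destruct (Rlt_dec y 1); [lra | reflexivity]].
- rewrite Rmult_0_r, Rplus_0_l; field; lra.
- rewrite Rmult_1_r, Rminus_diag, Rmult_0_r, exp_0; ring.
- auto_derive; [auto | field; lra].
- auto_derive; [auto | replace (- r2 - lam1) with (- (p * p)) by lra; field; lra].
- auto_derive; [auto | unfold Rminus; ring].
- auto_derive; [auto | replace (- r3 - lam1) with (be * be) by lra; unfold Rminus; ring].
- apply Rlt_le, Rdiv_lt_0_compat, HS; apply Hsin; lra.
- apply Rmult_le_pos; [apply Rlt_le, Rdiv_lt_0_compat | apply Rlt_le, exp_pos]; auto.
- rewrite Rmult_0_r, Rplus_0_l, Rmult_assoc, HcC.
  replace (- lam1 - r1) with (- r1 - lam1) by ring; apply Req_le; fold al; field; lra.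
- rewrite Rmult_1_r, Rminus_diag, Rmult_0_r, exp_0.
  replace (L * p * cos (L * p + C3)) with (L * (p * cos (L * p + C3))) by ring.
  replace (p * cos (L * p + C3)) with (- (be * sin (L * p + C3))) by lra.
  apply Req_le; field; lra.
Qed.

Lemma eigen_profile_short_r1_lt_r3 r1 r2 r3 L : r1 < r3 -> r3 < r2 -> 0 < L ->
  L <= Lbar r1 r2 r3 ->
  let q := sqrt (r2 - r3) in let C3 := arccot (sqrt ((r3 - r1) / (r2 - r3))) in
  eigen_profile r1 r2 r3 L (- r3)
    (fun y => sin (L * q * y + C3) / sin C3) (fun y => L * q * cos (L * q * y + C3) / sin C3)
    (fun y => (sin (L * q + C3) + q * cos (L * q + C3) * L * (y - 1)) / sin C3)
    (fun _ => q * cos (L * q + C3) * L / sin C3).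
Proof.
intros H13 H32 HL HLb q C3.
assert (Hphi : forall y, phi1 r1 r2 r3 L (- r3) y = psi2 r1 r2 r3 L y).
{ intros y; unfold phi1; destruct (Rlt_dec (Lbar r1 r2 r3) L); [lra|].
  destruct (Rlt_dec r1 r3); [reflexivity | lra]. }
unfold Lbar in HLb; destruct (Req_EM_T r1 r3); [lra|].
rewrite Rmax_right, Rabs_left, Ropp_minus_distr in HLb by lra.
destruct (short_phase (r2 - r3) (r3 - r1) L) as (HS & HcC & Hcth & Hsin); try lra.
fold q C3 in HS, HcC, Hcth, Hsin.
assert (Hq2 : q * q = r2 - r3) by (apply sqrt_sqrt; lra).
assert (Hsth := Hsin 1 ltac:(lra)); rewrite Rmult_1_r in Hsth.
split; intros; try rewrite Hphi; unfold psi2; fold q C3.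
- destruct (Rle_dec y 0); [|destruct (Rlt_dec y 1); [reflexivity | lra]].
  replace y with 0 by lra; rewrite !Rmult_0_r, Rplus_0_l, exp_0; field; lra.
- destruct (Rle_dec y 0); [lra | destruct (Rlt_dec y 1); [lra | reflexivity]].
- rewrite Rmult_0_r, Rplus_0_l; field; lra.
- rewrite Rmult_1_r, Rminus_diag, Rmult_0_r, Rplus_0_r; reflexivity.
- auto_derive; [auto | field; lra].
- auto_derive; [auto | replace (- r2 - - r3) with (- (q * q)) by lra; field; lra].
- auto_derive; [auto | field; lra].
- auto_derive; [auto | ring].
- apply Rlt_le, Rdiv_lt_0_compat, HS; apply Hsin; lra.
- apply Rdiv_le_0_compat; auto.
  assert (0 <= q * cos (L * q + C3) * L * (y - 1))
    by (repeat apply Rmult_le_pos; try apply sqrt_pos; lra).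
  lra.
- rewrite Rmult_0_r, Rplus_0_l, Rmult_assoc, HcC.
  replace (- - r3 - r1) with (r3 - r1) by ring; apply Req_le; field; lra.
- rewrite Rmult_1_r; apply Req_le; field; lra.
Qed.

Lemma eigen_profile_short_r3_lt_r1 r1 r2 r3 L : r3 < r1 -> r1 < r2 -> 0 < L ->
  L <= Lbar r1 r2 r3 ->
  let q := sqrt (r2 - r1) in let sb := sqrt (r1 - r3) in
  let C3 := arccot (sqrt ((r1 - r3) / (r2 - r1))) in
  let P := sin (L * q + C3) / sin C3 in
  eigen_profile r1 r2 r3 L (- r1)
    (fun y => sin (L * q * (1 - y) + C3) / sin C3 / P)
    (fun y => - (L * q) * cos (L * q * (1 - y) + C3) / sin C3 / P)
    (fun y => exp (L * sb * (1 - y)) / P) (fun y => - (L * sb) * (exp (L * sb * (1 - y)) / P)).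
Proof.
intros H31 H12 HL HLb q sb C3 P.
assert (Hphi : forall y, phi1 r1 r2 r3 L (- r1) y = psi2 r3 r2 r1 L (1 - y) / psi2 r3 r2 r1 L 1).
{ intros y; unfold phi1; destruct (Rlt_dec (Lbar r1 r2 r3) L); [lra|].
  destruct (Rlt_dec r1 r3); [lra | reflexivity]. }
unfold Lbar in HLb; destruct (Req_EM_T r1 r3); [lra|].
rewrite Rmax_left, Rabs_right in HLb by lra.
destruct (short_phase (r2 - r1) (r1 - r3) L) as (HS & HcC & Hcth & Hsin); try lra.
fold q sb C3 in HS, HcC, Hcth, Hsin.
assert (Hq2 : q * q = r2 - r1) by (apply sqrt_sqrt; lra).
assert (Hsb2 : sb * sb = r1 - r3) by (apply sqrt_sqrt; lra).
assert (Hsth := Hsin 1 ltac:(lra)); rewrite Rmult_1_r in Hsth.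
assert (HP : 0 < P) by (apply Rdiv_lt_0_compat; auto).
assert (EP : psi2 r3 r2 r1 L 1 = P).
{ unfold psi2; fold q C3; destruct (Rle_dec 1 0); [lra|]; destruct (Rlt_dec 1 1); [lra|].
  unfold P; rewrite Rminus_diag, Rmult_0_r, Rplus_0_r; reflexivity. }
split; intros; try (rewrite Hphi, EP; unfold psi2; fold q sb C3).
- destruct (Rle_dec (1 - y) 0); [lra|]. destruct (Rlt_dec (1 - y) 1); [reflexivity|].
  replace y with 0 by lra; unfold P.
  rewrite !Rminus_0_r, Rminus_diag, !Rmult_1_r, Rmult_0_r, Rplus_0_r; reflexivity.
- destruct (Rle_dec (1 - y) 0); [reflexivity | lra].
- unfold P; rewrite Rminus_0_r, Rmult_1_r; field; lra.
- rewrite !Rminus_diag, !Rmult_0_r, Rplus_0_l, exp_0; field; lra.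
- auto_derive; [auto | unfold Rminus; field; lra].
- auto_derive; [auto | replace (- r2 - - r1) with (- (q * q)) by lra; unfold Rminus; field; lra].
- auto_derive; [auto | unfold Rminus; field; lra].
- auto_derive; [auto | replace (- r3 - - r1) with (sb * sb) by lra; unfold Rminus; field; lra].
- apply Rlt_le, Rdiv_lt_0_compat, HP; apply Rdiv_lt_0_compat, HS; apply Hsin; lra.
- apply Rlt_le, Rdiv_lt_0_compat, HP; apply exp_pos.
- replace (- - r1 - r1) with 0 by ring; rewrite sqrt_0, Rmult_0_r, Rminus_0_r, Rmult_1_r.
  assert (0 <= L * q * cos (L * q + C3) / sin C3 / P).
  { apply Rdiv_le_0_compat, HP; apply Rdiv_le_0_compat, HS.
    apply Rmult_le_pos; [apply Rmult_le_pos; [lra | apply sqrt_pos] | exact Hcth]. }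
  replace (- (L * q) * cos (L * q + C3) / sin C3 / P)
    with (- (L * q * cos (L * q + C3) / sin C3 / P)) by (field; lra).
  lra.
- rewrite !Rminus_diag, !Rmult_0_r, Rplus_0_l, exp_0.
  replace (- (L * q) * cos C3) with (- L * (q * cos C3)) by ring; rewrite HcC.
  apply Req_le; field; lra.
Qed.

Lemma eigen_profile_exists r1 r2 r3 L lam1 : 0 < L -> Rmax r1 r3 < r2 ->
  is_lambda1 r1 r2 r3 L lam1 ->
  exists g1 g1' g2 g2', eigen_profile r1 r2 r3 L lam1 g1 g1' g2 g2'.
Proof.
intros HL Hmax [Hshort Hlong].
destruct (Rlt_dec (Lbar r1 r2 r3) L) as [HLb|HLb].
- destruct (Hlong HLb) as (Hl1 & Hl2 & Hcot).
  eexists _, _, _, _; exact (eigen_profile_long r1 r2 r3 L lam1 HL HLb Hl1 Hl2 Hcot).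
- assert (HLb' : L <= Lbar r1 r2 r3) by lra.
  rewrite (Hshort HLb'). destruct (Rtotal_order r1 r3) as [H13|[H13|H13]].
  + rewrite Rmax_right in Hmax |- * by lra.
    eexists _, _, _, _; exact (eigen_profile_short_r1_lt_r3 r1 r2 r3 L H13 Hmax HL HLb').
  + exfalso; apply HLb; unfold Lbar; destruct (Req_EM_T r1 r3); [lra | contradiction].
  + rewrite Rmax_left in Hmax |- * by lra.
    eexists _, _, _, _; exact (eigen_profile_short_r3_lt_r1 r1 r2 r3 L H13 Hmax HL HLb').
Qed.

Lemma is_lambda1_le r1 r2 r3 L lam1 : is_lambda1 r1 r2 r3 L lam1 -> r1 <= - lam1.
Proof.
intros [Hshort Hlong]; assert (Hx := Rmax_l r1 r3).
destruct (Rlt_dec (Lbar r1 r2 r3) L) as [HLb|HLb].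
- destruct (Hlong HLb) as (_ & Hl & _).
  assert (Hm := Rmin_l (- Rmax r1 r3) (PI ^ 2 / L ^ 2 - r2)); lra.
- rewrite Hshort; lra.
Qed.

(** * The super-solution for [tau = B = 0] *)

Definition liouville (cA L : R) (g : R -> R) (z : R) : R := exp (- cA * z / 2) * g (z / L).

Lemma liouville_is_derive cA L (g g' : R -> R) z : L <> 0 ->
  is_derive g (z / L) (g' (z / L)) ->
  is_derive (liouville cA L g) z (liouville cA L g' z / L - cA / 2 * liouville cA L g z).
Proof.
intros HL Hg; unfold liouville. auto_derive; [eexists; exact Hg|].
replace (Derive (fun x => g x) (z * / L)) with (g' (z / L)) by (symmetry; apply is_derive_unique, Hg).
unfold Rdiv; field; auto.
Qed.

Lemma liouville_ode cA L k (g g' : R -> R) : L <> 0 ->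
  (forall y, is_derive g y (g' y)) -> (forall y, is_derive g' y (L ^ 2 * k * g y)) ->
  forall z, is_derive (fun z => liouville cA L g' z / L - cA / 2 * liouville cA L g z) z
    (- cA * (liouville cA L g' z / L - cA / 2 * liouville cA L g z)
     + (k - cA ^ 2 / 4) * liouville cA L g z).
Proof.
intros HL Hg Hg' z.
assert (D1 := liouville_is_derive cA L g' (fun y => L ^ 2 * k * g y) z HL (Hg' _)).
assert (D0 := liouville_is_derive cA L g g' z HL (Hg _)).
eapply is_derive_eq.
- eapply is_derive_ext; [|apply is_derive_plus;
    [exact (is_derive_scal _ _ (/ L) _ D1) | exact (is_derive_scal _ _ (- cA / 2) _ D0)]].
  intros; simpl; unfold plus, scal; simpl; unfold mult; simpl; unfold Rdiv; ring.
- unfold plus, scal; simpl; unfold mult; simpl; unfold liouville; field; auto.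
Qed.

Lemma Rdiv_lt_1 a L : 0 < L -> a < L -> a / L < 1.
Proof. intros; apply (Rmult_lt_reg_r L); [lra|]; unfold Rdiv; rewrite Rmult_assoc, Rinv_l; lra. Qed.

Lemma Rdiv_ge_1 a L : 0 < L -> L <= a -> 1 <= a / L.
Proof. intros; apply (Rmult_le_reg_r L); [lra|]; unfold Rdiv; rewrite Rmult_assoc, Rinv_l; lra. Qed.

Section TravellingSupersolution.
Variables (r1 r2 r3 L lam1 cA C T : R) (f : R -> R -> R -> R) (g1 g1' g2 g2' : R -> R).
Hypotheses (Hr1 : 0 < r1) (HL : 0 < L) (HC : 1 <= C)
  (Hlam1 : r1 <= - lam1) (HcA : 2 * sqrt (- lam1) < cA)
  (Hprof : eigen_profile r1 r2 r3 L lam1 g1 g1' g2 g2')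
  (Hf_upper : forall t x u, 0 <= t < T -> 0 <= u ->
     f t x u <= rfun r1 r2 r3 L (fun s => cA * s) t x * u)
  (Hf_neg : forall t x u, 1 < u -> f t x u < 0).

Local Notation c := (cspeed r1 lam1 cA).
Local Notation lc := (lam_of r1 (cspeed r1 lam1 cA)).

Let speed : 0 < lc /\ c * lc = lc ^ 2 + r1 /\ c <= cA /\ lc <= cA / 2 - sqrt (- lam1 - r1) /\
  lc * (cA - c) <= cA ^ 2 / 4 + lam1 := cspeed_spec r1 lam1 cA Hr1 Hlam1 HcA.
Let lc_pos : 0 < lc := proj1 speed.
Let front_root : c * lc = lc ^ 2 + r1 := proj1 (proj2 speed).
Let c_le_cA : c <= cA := proj1 (proj2 (proj2 speed)).
Let lc_le_slope : lc <= cA / 2 - sqrt (- lam1 - r1) := proj1 (proj2 (proj2 (proj2 speed))).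
Let lc_decay_le : lc * (cA - c) <= cA ^ 2 / 4 + lam1 := proj2 (proj2 (proj2 (proj2 speed))).
Let ln2_lc_pos : 0 < ln 2 / lc.
Proof. apply Rdiv_lt_0_compat; [rewrite <- ln_1; apply ln_increasing | ]; lra. Qed.

Definition plateau_end (s : R) : R := c * s - ln 2 / lc.
Definition zone_start (s : R) : R := cA * s.
Definition zone_end (s : R) : R := cA * s + L.

Definition Cubar (t x : R) : R := C * ubar r1 r2 r3 L lam1 cA t x.
Definition v_plateau := moving_frame (fun _ => 2 * C) 0 (fun _ => 1).
Definition front_profile (z : R) : R := exp (- lc * z).
Definition v_front := moving_frame (fun _ => C) c front_profile.
Definition zone_amp (s : R) : R := C * exp (- lc * (cA - c) * s).
Definition v_zone (g : R -> R) := moving_frame zone_amp cA (liouville cA L g).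

Lemma interfaces_ordered s : 0 <= s -> plateau_end s < zone_start s /\ zone_start s < zone_end s.
Proof.
intros Hs; unfold plateau_end, zone_start, zone_end.
assert (c * s <= cA * s) by (apply Rmult_le_compat_r; lra). lra.
Qed.

Lemma Cubar_plateau s y : y <= plateau_end s -> Cubar s y = v_plateau s y.
Proof.
intros Hy; unfold Cubar, ubar, v_plateau, moving_frame; cbv zeta.
destruct (Rle_dec y (c * s - ln 2 / lc)); [ring | contradiction].
Qed.

Lemma Cubar_front s y : plateau_end s < y < zone_start s -> Cubar s y = v_front s y.
Proof.
intros Hy; unfold Cubar, ubar, v_front, moving_frame, plateau_end, zone_start in *; cbv zeta.
destruct (Rle_dec y (c * s - ln 2 / lc)); [lra|].
destruct (Rlt_dec y (cA * s)); [reflexivity | lra].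
Qed.

Lemma Cubar_zone s y : plateau_end s < y -> zone_start s <= y ->
  Cubar s y = zone_amp s * exp (- cA * (y - cA * s) / 2) * phi1 r1 r2 r3 L lam1 ((y - cA * s) / L).
Proof.
intros Hy Hy'; unfold Cubar, ubar, zone_amp, plateau_end, zone_start in *; cbv zeta.
destruct (Rle_dec y (c * s - ln 2 / lc)); [lra|].
destruct (Rlt_dec y (cA * s)); [lra|].
ring.
Qed.

Lemma Cubar_zone_left s y : plateau_end s < y -> zone_start s <= y < zone_end s ->
  Cubar s y = v_zone g1 s y.
Proof.
intros Hy Hy'; rewrite Cubar_zone by lra; unfold v_zone, moving_frame, liouville.
unfold zone_start, zone_end in Hy'.
rewrite (phi1_left Hprof); [ring|].
split; [apply Rdiv_le_0_compat | apply Rdiv_lt_1]; lra.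
Qed.

Lemma Cubar_zone_right s y : plateau_end s < y -> zone_end s <= y -> Cubar s y = v_zone g2 s y.
Proof.
intros Hy Hy'; assert (zone_start s <= y) by (unfold zone_start, zone_end in *; lra).
rewrite Cubar_zone by lra; unfold v_zone, moving_frame, liouville.
unfold zone_end in Hy'.
rewrite (phi1_right Hprof); [ring | apply Rdiv_ge_1; lra].
Qed.

Lemma v_plateau_supersolution t x :
  C12_at v_plateau t x /\ dt v_plateau t x >= dxx v_plateau t x + f t x (v_plateau t x).
Proof.
split.
- exact (moving_frame_C12 _ _ _ _ _ 0 (is_derive_const_R _) (continuous_const_R 0)
    (is_derive_const_R 1) (is_derive_const_R 0) (continuous_const_R 0) t x).
- unfold v_plateau.
  rewrite (moving_frame_dt _ (fun _ => 0) _ (fun _ => 0) 0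
             (is_derive_const_R _) (is_derive_const_R _)),
    (moving_frame_dxx _ _ (fun _ => 0) (fun _ => 0) 0
       (is_derive_const_R _) (is_derive_const_R _)).
  unfold moving_frame.
  assert (f t x (2 * C * 1) < 0) by (apply Hf_neg; lra). lra.
Qed.

Section Front.
Let Dw z : is_derive front_profile z (- lc * front_profile z).
Proof. unfold front_profile; auto_derive; auto; ring. Qed.
Let Dw' z : is_derive (fun z => - lc * front_profile z) z (lc ^ 2 * front_profile z).
Proof. unfold front_profile; auto_derive; auto; ring. Qed.
Let Cw'' z : continuous (fun z => lc ^ 2 * front_profile z) z.
Proof. apply ex_derive_continuous_R; unfold front_profile; auto_derive; auto. Qed.

Lemma v_front_supersolution t x : 0 <= t < T -> x < zone_start t ->
  C12_at v_front t x /\ dt v_front t x >= dxx v_front t x + f t x (v_front t x).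
Proof.
intros Ht Hx; split.
- exact (moving_frame_C12 _ _ _ _ _ c (is_derive_const_R C) (continuous_const_R 0) Dw Dw' Cw'' t x).
- unfold v_front; rewrite (moving_frame_dt _ _ _ _ c (is_derive_const_R C) Dw),
    (moving_frame_dxx _ _ _ _ c Dw Dw').
  unfold moving_frame.
  assert (Hw : 0 < front_profile (x - c * t)) by apply exp_pos.
  assert (Hf := Hf_upper t x (C * front_profile (x - c * t)) Ht ltac:(nra)).
  unfold rfun, zone_start in Hf, Hx; destruct (Rlt_dec x (cA * t)); [|lra].
  nra.
Qed.

Lemma is_derive_v_front t x :
  is_derive (fun y => v_front t y) x (C * (- lc * front_profile (x - c * t))).
Proof. exact (moving_frame_is_derive_x _ _ (fun z => - lc * front_profile z) c t x (Dw _)). Qed.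
End Front.

Section Zone.
Variables (g g' : R -> R) (r : R).
Hypotheses (Dg : forall y, is_derive g y (g' y))
  (Dg' : forall y, is_derive g' y (L ^ 2 * (- r - lam1) * g y)).

Let W := liouville cA L g.
Let W' (z : R) : R := liouville cA L g' z / L - cA / 2 * W z.
Let W'' (z : R) : R := - cA * W' z + (- r - lam1 - cA ^ 2 / 4) * W z.
Let DW z : is_derive W z (W' z) := liouville_is_derive cA L g g' z ltac:(lra) (Dg _).
Let DW' z : is_derive W' z (W'' z) := liouville_ode cA L _ g g' ltac:(lra) Dg Dg' z.
Let DW1 z : is_derive (liouville cA L g') z (liouville cA L (fun y => L ^ 2 * (- r - lam1) * g y) z / L
  - cA / 2 * liouville cA L g' z) := liouville_is_derive cA L g' _ z ltac:(lra) (Dg' _).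
Let CW'' z : continuous W'' z.
Proof.
apply ex_derive_continuous_R; unfold W'', W'.
auto_derive; repeat split; eexists; first [apply DW | apply DW1].
Qed.
Let Da s : is_derive zone_amp s (- lc * (cA - c) * zone_amp s).
Proof. unfold zone_amp; auto_derive; auto; ring. Qed.
Let Ca' s : continuous (fun s => - lc * (cA - c) * zone_amp s) s.
Proof. apply ex_derive_continuous_R; unfold zone_amp; auto_derive; auto. Qed.

Lemma v_zone_supersolution t x : 0 <= t < T -> 0 <= g ((x - cA * t) / L) ->
  rfun r1 r2 r3 L (fun s => cA * s) t x = r ->
  C12_at (v_zone g) t x /\ dt (v_zone g) t x >= dxx (v_zone g) t x + f t x (v_zone g t x).
Proof.
intros Ht Hg Hr; split.
- exact (moving_frame_C12 _ _ _ _ _ cA Da Ca' DW DW' CW'' t x).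
- unfold v_zone; rewrite (moving_frame_dt _ _ _ _ cA Da DW), (moving_frame_dxx _ _ _ _ cA DW DW').
  unfold moving_frame, W''; fold W.
  assert (HA : 0 < zone_amp t) by (unfold zone_amp; assert (Hc := exp_pos (- lc * (cA - c) * t)); nra).
  assert (HW : 0 <= W (x - cA * t))
    by (unfold W, liouville; apply Rmult_le_pos; [apply Rlt_le, exp_pos | exact Hg]).
  assert (Hf := Hf_upper t x (zone_amp t * W (x - cA * t)) Ht ltac:(nra)).
  rewrite Hr in Hf.
  assert (0 <= zone_amp t * W (x - cA * t) * (cA ^ 2 / 4 + lam1 - lc * (cA - c)))
    by (apply Rmult_le_pos; [apply Rmult_le_pos|]; lra).
  lra.
Qed.

Lemma is_derive_v_zone t x :
  is_derive (fun y => v_zone g t y) x (zone_amp t * W' (x - cA * t)).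
Proof. exact (moving_frame_is_derive_x _ _ W' cA t x (DW _)). Qed.

Lemma v_zone_cont t x : cont2 (v_zone g) t x.
Proof. apply cont2_moving_frame; apply ex_derive_continuous_R; eexists; [apply Da | apply DW]. Qed.

End Zone.

Lemma v_plateau_cont t x : cont2 v_plateau t x.
Proof. apply cont2_moving_frame; apply continuous_const_R. Qed.

Lemma v_front_cont t x : cont2 v_front t x.
Proof.
apply cont2_moving_frame; [apply continuous_const_R|].
apply ex_derive_continuous_R; unfold front_profile; auto_derive; auto.
Qed.

Lemma interfaces_continuous t :
  continuity_pt plateau_end t /\ continuity_pt zone_start t /\ continuity_pt zone_end t.
Proof.
repeat split; apply continuity_pt_filterlim, ex_derive_continuous_R;
  unfold plateau_end, zone_start, zone_end; auto_derive; auto.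
Qed.

Lemma plateau_front_match t : v_front t (plateau_end t) = v_plateau t (plateau_end t).
Proof.
unfold v_front, v_plateau, moving_frame, front_profile, plateau_end.
replace (- lc * (c * t - ln 2 / lc - c * t)) with (ln 2) by (field; lra).
rewrite exp_ln; lra.
Qed.

Lemma front_zone_match t : v_zone g1 t (zone_start t) = v_front t (zone_start t).
Proof.
unfold v_zone, v_front, moving_frame, liouville, front_profile, zone_amp, zone_start.
rewrite Rminus_diag, Rmult_0_r, !Rdiv_0_l, exp_0, (g1_at_0 Hprof).
replace (- lc * (cA * t - c * t)) with (- lc * (cA - c) * t) by ring. ring.
Qed.

Lemma zone_match t : v_zone g1 t (zone_end t) = v_zone g2 t (zone_end t).
Proof.
unfold v_zone, moving_frame, liouville, zone_end.
replace ((cA * t + L - cA * t) / L) with 1 by (field; lra).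
now rewrite (g1_g2_at_1 Hprof).
Qed.

Lemma Cubar_near_plateau t x : x < plateau_end t ->
  locally_2d (fun s y => v_plateau s y = Cubar s y) t x.
Proof.
intros Hx; apply (locally_2d_impl (fun s y => y < plateau_end s)).
- apply locally_2d_forall; intros s y Hy; symmetry; apply Cubar_plateau; lra.
- apply locally_2d_below; [apply interfaces_continuous | exact Hx].
Qed.

Lemma Cubar_near_front t x : plateau_end t < x < zone_start t ->
  locally_2d (fun s y => v_front s y = Cubar s y) t x.
Proof.
intros Hx; apply (locally_2d_impl (fun s y => plateau_end s < y /\ y < zone_start s)).
- apply locally_2d_forall; intros s y Hy; symmetry; apply Cubar_front; lra.
- apply locally_2d_and; [apply locally_2d_above | apply locally_2d_below];
    try apply interfaces_continuous; lra.
Qed.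

Lemma Cubar_near_zone_left t x : 0 <= t -> zone_start t < x < zone_end t ->
  locally_2d (fun s y => v_zone g1 s y = Cubar s y) t x.
Proof.
intros Ht Hx; destruct (interfaces_ordered t Ht).
apply (locally_2d_impl (fun s y => plateau_end s < y /\ zone_start s < y /\ y < zone_end s)).
- apply locally_2d_forall; intros s y Hy; symmetry; apply Cubar_zone_left; lra.
- repeat apply locally_2d_and; try apply locally_2d_above; try apply locally_2d_below;
    try apply interfaces_continuous; lra.
Qed.

Lemma Cubar_near_zone_right t x : 0 <= t -> zone_end t < x ->
  locally_2d (fun s y => v_zone g2 s y = Cubar s y) t x.
Proof.
intros Ht Hx; destruct (interfaces_ordered t Ht).
apply (locally_2d_impl (fun s y => plateau_end s < y /\ zone_end s < y)).
- apply locally_2d_forall; intros s y Hy; symmetry; apply Cubar_zone_right; lra.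
- apply locally_2d_and; apply locally_2d_above; try apply interfaces_continuous; lra.
Qed.

Lemma Cubar_near_plateau_end t : 0 <= t ->
  locally_2d (fun s y => Cubar s y = v_plateau s y \/ Cubar s y = v_front s y) t (plateau_end t).
Proof.
intros Ht; destruct (interfaces_ordered t Ht).
apply (locally_2d_impl (fun s y => y < zone_start s)).
- apply locally_2d_forall; intros s y Hy.
  destruct (Rle_dec y (plateau_end s)); [left; apply Cubar_plateau | right; apply Cubar_front]; lra.
- apply locally_2d_below; [apply interfaces_continuous | lra].
Qed.

Lemma Cubar_near_zone_start t : 0 <= t ->
  locally_2d (fun s y => Cubar s y = v_front s y \/ Cubar s y = v_zone g1 s y) t (zone_start t).
Proof.
intros Ht; destruct (interfaces_ordered t Ht).
apply (locally_2d_impl (fun s y => plateau_end s < y /\ y < zone_end s)).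
- apply locally_2d_forall; intros s y Hy.
  destruct (Rlt_dec y (zone_start s)); [left; apply Cubar_front | right; apply Cubar_zone_left]; lra.
- apply locally_2d_and; [apply locally_2d_above | apply locally_2d_below];
    try apply interfaces_continuous; lra.
Qed.

Lemma Cubar_near_zone_end t : 0 <= t ->
  locally_2d (fun s y => Cubar s y = v_zone g1 s y \/ Cubar s y = v_zone g2 s y) t (zone_end t).
Proof.
intros Ht; destruct (interfaces_ordered t Ht).
apply (locally_2d_impl (fun s y => plateau_end s < y /\ zone_start s < y)).
- apply locally_2d_forall; intros s y Hy.
  destruct (Rlt_dec y (zone_end s));
    [left; apply Cubar_zone_left | right; apply Cubar_zone_right]; lra.
- apply locally_2d_and; apply locally_2d_above; try apply interfaces_continuous; lra.
Qed.

Let D1 := g1_deriv Hprof.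
Let D1' := g1'_deriv Hprof.
Let D2 := g2_deriv Hprof.
Let D2' := g2'_deriv Hprof.

Lemma Cubar_cont_at_interfaces t : 0 <= t ->
  cont2 Cubar t (plateau_end t) /\ cont2 Cubar t (zone_start t) /\ cont2 Cubar t (zone_end t).
Proof.
intros Ht; destruct (interfaces_ordered t Ht) as [O1 O2]; repeat split.
- apply (cont2_of_local_cases Cubar v_plateau v_front);
    [apply v_plateau_cont | apply v_front_cont | | rewrite plateau_front_match |
     apply Cubar_near_plateau_end; lra];
    symmetry; apply Cubar_plateau; lra.
- apply (cont2_of_local_cases Cubar v_front (v_zone g1));
    [apply v_front_cont | apply (v_zone_cont g1 g1' D1) | rewrite <- front_zone_match | |
     apply Cubar_near_zone_start; lra];
    symmetry; apply Cubar_zone_left; lra.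
- apply (cont2_of_local_cases Cubar (v_zone g1) (v_zone g2));
    [apply (v_zone_cont g1 g1' D1) | apply (v_zone_cont g2 g2' D2) | rewrite zone_match | |
     apply Cubar_near_zone_end; lra];
    symmetry; apply Cubar_zone_right; lra.
Qed.

Lemma Cubar_cont t x : 0 <= t -> cont2 Cubar t x.
Proof.
intros Ht.
destruct (Cubar_cont_at_interfaces t Ht) as (C1 & C2 & C3).
destruct (Rtotal_order x (plateau_end t)) as [H1|[->|H1]]; [|exact C1|].
{ exact (cont2_ext_loc _ _ _ _ (Cubar_near_plateau t x H1) (v_plateau_cont t x)). }
destruct (Rtotal_order x (zone_start t)) as [H2|[->|H2]]; [|exact C2|].
{ exact (cont2_ext_loc _ _ _ _ (Cubar_near_front t x (conj H1 H2)) (v_front_cont t x)). }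
destruct (Rtotal_order x (zone_end t)) as [H3|[->|H3]]; [|exact C3|].
{ exact (cont2_ext_loc _ _ _ _ (Cubar_near_zone_left t x Ht (conj H2 H3))
    (v_zone_cont g1 g1' D1 t x)). }
exact (cont2_ext_loc _ _ _ _ (Cubar_near_zone_right t x Ht H3) (v_zone_cont g2 g2' D2 t x)).
Qed.

Lemma rfun_zone t x : zone_start t <= x < zone_end t ->
  rfun r1 r2 r3 L (fun s => cA * s) t x = r2.
Proof.
unfold rfun, zone_start, zone_end; intros Hx.
destruct (Rlt_dec x (cA * t)); [lra|]; destruct (Rlt_dec x (cA * t + L)); lra.
Qed.

Lemma rfun_beyond_zone t x : zone_end t <= x -> rfun r1 r2 r3 L (fun s => cA * s) t x = r3.
Proof.
unfold rfun, zone_end; intros Hx.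
destruct (Rlt_dec x (cA * t)); [lra|]; destruct (Rlt_dec x (cA * t + L)); lra.
Qed.

Lemma Cubar_supersolution_off t x : 0 < t < T ->
  x <> plateau_end t -> x <> zone_start t -> x <> zone_end t ->
  C12_at Cubar t x /\ dt Cubar t x >= dxx Cubar t x + f t x (Cubar t x).
Proof.
intros Ht N1 N2 N3; assert (Ht' : 0 <= t < T) by lra.
destruct (interfaces_ordered t (proj1 Ht')) as [O1 O2].
destruct (Rlt_dec x (plateau_end t)) as [H1|H1].
{ apply (supersolution_at_ext_loc f v_plateau);
    [apply Cubar_near_plateau | apply v_plateau_supersolution]; lra. }
destruct (Rlt_dec x (zone_start t)) as [H2|H2].
{ apply (supersolution_at_ext_loc f v_front);
    [apply Cubar_near_front | apply v_front_supersolution]; lra. }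
destruct (Rlt_dec x (zone_end t)) as [H3|H3].
- apply (supersolution_at_ext_loc f (v_zone g1)); [apply Cubar_near_zone_left; lra|].
  apply (v_zone_supersolution g1 g1' r2 D1 D1' t x Ht'); [|apply rfun_zone; lra].
  apply (g1_nonneg Hprof); unfold zone_start, zone_end in *.
  split; [apply Rdiv_le_0_compat | apply Rdiv_lt_1]; lra.
- apply (supersolution_at_ext_loc f (v_zone g2)); [apply Cubar_near_zone_right; lra|].
  apply (v_zone_supersolution g2 g2' r3 D2 D2' t x Ht'); [|apply rfun_beyond_zone; lra].
  apply (g2_nonneg Hprof); unfold zone_end in *; apply Rdiv_ge_1; lra.
Qed.

Lemma is_derive_v_plateau t x : is_derive (fun y => v_plateau t y) x 0.
Proof. unfold v_plateau, moving_frame; auto_derive; auto; ring. Qed.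

Lemma kink_plateau_end t : 0 <= t ->
  exists dl dr, left_dx Cubar t (plateau_end t) dl /\ right_dx Cubar t (plateau_end t) dr /\ dl >= dr.
Proof.
intros Ht; destruct (interfaces_ordered t Ht) as [O1 O2].
eexists _, _; split; [|split].
- apply (left_dx_of_eq Cubar (v_plateau t) t _ 1); [lra | | apply is_derive_v_plateau].
  intros y Hy; apply Cubar_plateau; lra.
- apply (right_dx_of_eq Cubar (v_front t) t _ (zone_start t - plateau_end t));
    [lra | | apply is_derive_v_front].
  intros y Hy; destruct (Req_dec y (plateau_end t)) as [->|Hne].
  + rewrite plateau_front_match; apply Cubar_plateau; lra.
  + apply Cubar_front; lra.
- assert (0 < C * lc * front_profile (plateau_end t - c * t))
    by (apply Rmult_lt_0_compat; [apply Rmult_lt_0_compat; lra | apply exp_pos]).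
  lra.
Qed.

Lemma kink_zone_start t : 0 <= t ->
  exists dl dr, left_dx Cubar t (zone_start t) dl /\ right_dx Cubar t (zone_start t) dr /\ dl >= dr.
Proof.
intros Ht; destruct (interfaces_ordered t Ht) as [O1 O2].
eexists _, _; split; [|split].
- apply (left_dx_of_eq Cubar (v_front t) t _ (zone_start t - plateau_end t));
    [lra | | apply is_derive_v_front].
  intros y Hy; destruct (Req_dec y (zone_start t)) as [->|Hne].
  + rewrite <- front_zone_match; apply Cubar_zone_left; lra.
  + apply Cubar_front; lra.
- apply (right_dx_of_eq Cubar (v_zone g1 t) t _ L); [lra | | apply (is_derive_v_zone g1 g1' D1)].
  intros y Hy; apply Cubar_zone_left; unfold zone_start, zone_end in *; lra.
- unfold zone_amp, front_profile, liouville, zone_start.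
  rewrite Rminus_diag, Rmult_0_r, !Rdiv_0_l, exp_0, (g1_at_0 Hprof).
  replace (- lc * (cA * t - c * t)) with (- lc * (cA - c) * t) by ring.
  assert (HE := exp_pos (- lc * (cA - c) * t)).
  assert (Hslope : g1' 0 / L <= sqrt (- lam1 - r1)).
  { apply (Rmult_le_reg_r L); [lra|]. unfold Rdiv; rewrite Rmult_assoc, Rinv_l by lra.
    assert (H0 := slope_at_0 Hprof); lra. }
  assert (0 <= C * exp (- lc * (cA - c) * t) * (cA / 2 - lc - g1' 0 / L))
    by (apply Rmult_le_pos; [apply Rmult_le_pos|]; lra).
  nra.
Qed.

Lemma kink_zone_end t : 0 <= t ->
  exists dl dr, left_dx Cubar t (zone_end t) dl /\ right_dx Cubar t (zone_end t) dr /\ dl >= dr.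
Proof.
intros Ht; destruct (interfaces_ordered t Ht) as [O1 O2].
eexists _, _; split; [|split].
- apply (left_dx_of_eq Cubar (v_zone g1 t) t _ L); [lra | | apply (is_derive_v_zone g1 g1' D1)].
  intros y Hy; destruct (Req_dec y (zone_end t)) as [->|Hne].
  + rewrite zone_match; apply Cubar_zone_right; lra.
  + apply Cubar_zone_left; unfold zone_start, zone_end in *; lra.
- apply (right_dx_of_eq Cubar (v_zone g2 t) t _ 1); [lra | | apply (is_derive_v_zone g2 g2' D2)].
  intros y Hy; apply Cubar_zone_right; lra.
- unfold liouville, zone_end.
  replace ((cA * t + L - cA * t) / L) with 1 by (field; lra).
  rewrite (g1_g2_at_1 Hprof).
  assert (HA : 0 < zone_amp t) by (unfold zone_amp; assert (H := exp_pos (- lc * (cA - c) * t)); nra).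
  assert (HE := exp_pos (- cA * (cA * t + L - cA * t) / 2)).
  assert (Hk := kink_at_1 Hprof).
  apply Rle_ge, Rmult_le_compat_l; [lra|].
  apply Rplus_le_compat_r, Rmult_le_compat_r; [apply Rlt_le, Rinv_0_lt_compat; lra|].
  apply Rmult_le_compat_l; lra.
Qed.

Lemma Cubar_gen_supersolution : gen_supersolution f 0 T Cubar.
Proof.
apply (gen_supersolution_intro f 0 T Cubar [plateau_end; zone_start; zone_end]).
- intros t x Ht; apply Cubar_cont; lra.
- intros g Hg t _; destruct (interfaces_continuous t) as (? & ? & ?).
  simpl in Hg; intuition (subst; assumption).
- intros t x Ht Hx; apply Cubar_supersolution_off; auto;
    [apply (Hx plateau_end) | apply (Hx zone_start) | apply (Hx zone_end)]; simpl; tauto.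
- intros t x Ht [g [Hg ->]]; simpl in Hg.
  destruct Hg as [<-|[<-|[<-|[]]]];
    [apply kink_plateau_end | apply kink_zone_start | apply kink_zone_end]; lra.
Qed.

End TravellingSupersolution.

Lemma rfun_translate r1 r2 r3 L (A : R -> R) cA a b t x : A (a + t) = cA * t + b ->
  rfun r1 r2 r3 L A (a + t) (b + x) = rfun r1 r2 r3 L (fun s => cA * s) t x.
Proof.
intros HA; unfold rfun; rewrite HA.
destruct (Rlt_dec (b + x) (cA * t + b)), (Rlt_dec x (cA * t)); try lra.
destruct (Rlt_dec (b + x) (cA * t + b + L)), (Rlt_dec x (cA * t + L)); lra.
Qed.

Theorem lemma3p6
  (r1 r2 r3 L M lam1 cA B tau T : R) (A : R -> R) (f : R -> R -> R -> R)
  (Hr1 : 0 < r1) (Hr2 : 0 < r2) (Hr3 : 0 < r3) (HL : 0 < L) (HM : 0 < M)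
  (Hr2max : Rmax r1 r3 < r2)
  (Hlam1 : is_lambda1 r1 r2 r3 L lam1)
  (HcA : 2 * sqrt (- lam1) < cA)
  (HB : 0 <= B) (Htau : 0 <= tau) (HT : 0 < T)
  (HAcont : continuity A) (HApos : forall t, 0 <= A t)
  (HAlin : forall t, tau <= t < tau + T -> A t = cA * (t - tau) + B)
  (Hfbdd : forall K, exists MK, forall t x u, Rabs u <= K -> Rabs (f t x u) <= MK)
  (HfC2 : forall t x,
     (forall u, ex_derive (f t x) u) /\
     (forall u, ex_derive (Derive (f t x)) u) /\
     (forall u, continuous (Derive_n (f t x) 2) u))
  (Hf0 : forall t x, f t x 0 = 0)
  (Hfu0 : forall t x, is_derive (f t x) 0 (rfun r1 r2 r3 L A t x))
  (Hfkpp : forall t x u, 0 <= u ->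
     rfun r1 r2 r3 L A t x * u >= f t x u /\
     f t x u >= rfun r1 r2 r3 L A t x * u - M * u ^ 2)
  (Hfneg : forall t x u, 1 < u -> f t x u < 0) :
  forall C, 1 <= C ->
    gen_supersolution f tau (tau + T)
      (fun t x => C * ubar r1 r2 r3 L lam1 cA (t - tau) (x - B)).
Proof.
intros C HC.
destruct (eigen_profile_exists r1 r2 r3 L lam1 HL Hr2max Hlam1) as (g1 & g1' & g2 & g2' & Hprof).
rewrite <- (Rplus_0_r tau) at 1.
apply (gen_supersolution_shift tau B (Cubar r1 r2 r3 L lam1 cA C)).
apply (Cubar_gen_supersolution r1 r2 r3 L lam1 cA C T _ g1 g1' g2 g2'
  Hr1 HL HC (is_lambda1_le _ _ _ _ _ Hlam1) HcA Hprof).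
- intros t x u Ht Hu.
  rewrite <- (rfun_translate r1 r2 r3 L A cA tau B t x) by (rewrite HAlin; [ring | lra]).
  apply Rge_le, Hfkpp, Hu.
- intros t x u; apply Hfneg.
Qed.
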